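(* Let $Fa$ and $Fb$ be two distinct points of $\mathrm{PG}(n-1,q)$ ($a,b\in L^*$), and let $\ell$ be the line joining them. Put $m=[F(ab^{-1}):F]$, the degree of the field extension of $F$ generated by $ab^{-1}$. Then $j(\ell)$ is the image of an $(m-1)$-uple embedding.
   Context: Let $q$ be a prime power, $F=\mathbb F_q$, $n\ge 2$ an integer, and $L=\mathbb F_{q^n}\supseteq F$. Regard $L$ as an $n$-dimensional $F$-vector space; $\mathrm{PG}(n-1,q)$ denotes the projective space whose points are the one-dimensional $F$-subspaces $Fx$, $x\in L^*$, and whose lines are the two-dimensional $F$-subspaces (identified with their sets of points). Define $j:\mathrm{PG}(n-1,q)\to\mathrm{PG}(n-1,q)$ by $j(Fx)=Fx^{-1}$. For an integer $r\ge1$, a set $X$ of points of a projective space $\mathrm{PG}(V)$ over $F$ is called the image of an $r$-uple embedding if there is an injective $F$-linear map $\phi:F^{r+1}\to V$ such that $X=\{F\,\phi(t_0^r,t_0^{r-1}t_1,\dots,t_0t_1^{r-1},t_1^r):(t_0,t_1)\in F^2\setminus\{(0,0)\}\}$. *)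

From HB Require Import structures.
From mathcomp Require Import all_boot all_order all_algebra all_field.
Set Implicit Arguments. Unset Strict Implicit. Unset Printing Implicit Defensive.
Import GRing.Theory.
Local Open Scope ring_scope.

(* Setting: F = F_q a finite field, L a field extension of F of degree n
   (hence L = F_{q^n}).  Points of PG(n-1,q) are 1-dimensional F-subspaces
   of L; sets of points are predicates on {vspace L}. *)

Section PG.
Variables (F : finFieldType) (L : fieldExtType F).

Definition is_point (U : {vspace L}) : Prop := \dim U = 1%N.

(* j(Fx) = F x^{-1}; on a point U = Fx we take the generator vpick U
   (any nonzero element of U), which gives the same subspace. *)
Definition jmap (U : {vspace L}) : {vspace L} := <[(vpick U)^-1]>%VS.

Definition line_join (a b : L) : {vspace L} := (<[a]> + <[b]>)%VS.

Definition jimage (l : {vspace L}) (P : {vspace L}) : Prop :=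
  exists2 Q : {vspace L}, is_point Q /\ (Q <= l)%VS & P = jmap Q.

Definition veronese_vec (r : nat) (t0 t1 : F) : 'rV[F]_(r.+1) :=
  \row_(i < r.+1) (t0 ^+ (r - i) * t1 ^+ i).

Definition r_uple_image (r : nat) (X : {vspace L} -> Prop) : Prop :=
  exists phi : {linear 'rV[F]_(r.+1) -> L},
    injective phi /\
    forall P : {vspace L},
      X P <-> exists t0 t1 : F, (t0, t1) != (0, 0) /\
                                 P = <[phi (veronese_vec r t0 t1)]>%VS.
End PG.

(* Put c = a / b, let f be the minimal polynomial of c over F and
   m = deg f = [F(c):F] = r + 1.  The points of the line are
   F (t0 a + t1 b) = F b (t0 c + t1) with (t0, t1) != (0, 0), and t0 c + t1
   never vanishes because c is not in F.  The Horner tails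
   d_i = sum_(j >= i) f_j c^(j - i) satisfy d_i = f_i + c d_(i+1), d_0 = f(c) = 0
   and d_m = 1, so a telescoping sum gives, for all T0, T1,
     (T0 c + T1) * sum_(i <= r) T0^(r-i) T1^i (-1)^i d_(i+1)
        = - sum_(i <= m) f_i (-T1)^i T0^(m-i),
   which lies in F when T0, T1 do.  Hence (t0 a + t1 b)^-1 is an F-multiple of
   phi(t0^r, ..., t1^r), where phi is the F-linear map e_i |-> b^-1 (-1)^i d_(i+1).
   Finally d_1, ..., d_m are F-linearly independent (a relation would give a
   nonzero polynomial over F of degree < m vanishing at c), so phi is injective
   and the Veronese sums never vanish. *)

From HB Require Import structures.
From mathcomp Require Import all_boot all_order all_algebra all_field.
From mathcomp Require Import ring zify.
Import GRing.Theory.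
Set Implicit Arguments. Unset Strict Implicit. Unset Printing Implicit Defensive.
Local Open Scope ring_scope.

Definition lcomb (K : nzRingType) (V : lmodType K) k (w : 'I_k -> V)
  (x : 'rV[K]_k) : V := \sum_i x 0 i *: w i.

Fact lcomb_is_linear (K : nzRingType) (V : lmodType K) k (w : 'I_k -> V) :
  linear (lcomb w).
Proof.
move=> s x y; rewrite /lcomb scaler_sumr -big_split; apply: eq_bigr => i _.
by rewrite !mxE scalerDl scalerA.
Qed.

HB.instance Definition _ (K : nzRingType) (V : lmodType K) k (w : 'I_k -> V) :=
  GRing.isLinear.Build _ _ _ _ (lcomb w) (lcomb_is_linear w).

Section HornerTails.
Variables (F : fieldType) (L : fieldExtType F) (c : L).

Local Notation f := (minPoly 1 c).

Definition horner_tail (i : nat) : L := (Poly (drop i f)).[c].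

Lemma size_minPoly1 : size f = (\dim <<1; c>>).+1.
Proof. by rewrite size_minPoly adjoin_degreeE dimv1 divn1. Qed.

Lemma minPoly1_coef_in1 i : f`_i \in 1%VS.
Proof. exact: (polyOverP (minPolyOver 1 c)). Qed.

Lemma minPoly1_coef_top : f`_(\dim <<1; c>>) = 1.
Proof. by have := monicP (monic_minPoly 1 c); rewrite /lead_coef size_minPoly1. Qed.

(* Horner's recurrence; with tail 0 = f(c) = 0 and tail m = 1 it drives the
   telescoping identity below. *)
Lemma horner_tail_rec i : horner_tail i = f`_i + c * horner_tail i.+1.
Proof.
rewrite /horner_tail; case: (ltnP i (size f)) => hi.
  by rewrite (drop_nth 0 hi) /= cons_poly_def hornerD hornerMX hornerC mulrC addrC.
by rewrite !drop_oversize ?(leq_trans hi) // nth_default // horner0 mulr0 addr0.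
Qed.

Lemma horner_tail0 : horner_tail 0 = 0.
Proof. by rewrite /horner_tail drop0 polyseqK; apply/rootP/root_minPoly. Qed.

Lemma horner_tail_oversize i : (\dim <<1; c>> < i)%N -> horner_tail i = 0.
Proof.
by move=> hi; rewrite /horner_tail drop_oversize ?size_minPoly1 // horner0.
Qed.

Lemma minPoly1_min_size (p : {poly L}) :
  p \is a polyOver 1%VS -> root p c -> (size p <= \dim <<1; c>>)%N -> p = 0.
Proof.
move=> p1 pc hp; apply/eqP; apply: contraTT hp => nz_p.
by rewrite -ltnNge -ltnS -size_minPoly1 ltnS (dvdp_leq nz_p) // minPoly_dvdp.
Qed.

End HornerTails.

Section VeroneseTails.
Variables (F : fieldType) (L : fieldExtType F) (c : L) (r : nat).
Hypothesis hm : \dim <<1; c>> = r.+1.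

Local Notation f := (minPoly 1 c).

(* The images of the unit vectors, up to the factor b^-1. *)
Definition tail_basis (i : nat) : L := (-1) ^+ i * horner_tail c i.+1.

Definition veronese_tail_sum (T0 T1 : L) : L :=
  \sum_(i < r.+1) T0 ^+ (r - i) * T1 ^+ i * tail_basis i.

(* Multiplying the Veronese sum by T0 c + T1 telescopes to the binary form
   attached to f, evaluated at (T0, -T1). *)
Lemma veronese_tail_identity (T0 T1 : L) :
  (T0 * c + T1) * veronese_tail_sum T0 T1
  = - \sum_(i < r.+2) f`_i * (- T1) ^+ i * T0 ^+ (r.+1 - i).
Proof.
pose g k := (-1) ^+ k * T0 ^+ (r.+1 - k) * T1 ^+ k * horner_tail c k.
have step (i : 'I_r.+1) : (T0 * c + T1) * (T0 ^+ (r - i) * T1 ^+ i * tail_basis i)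
    = (g i - g i.+1) - f`_i * (- T1) ^+ i * T0 ^+ (r.+1 - i).
  have hri : (r.+1 - i = (r - i).+1)%N by have := ltn_ord i; lia.
  rewrite /g /tail_basis (horner_tail_rec c i) subSS [(- T1) ^+ _]exprNn hri.
  by rewrite !exprS; ring.
rewrite /veronese_tail_sum mulr_sumr (eq_bigr _ (fun i _ => step i)) sumrB.
have -> : \sum_(i < r.+1) (g i - g i.+1) = - (g r.+1 - g 0%N).
  by rewrite -(telescope_sumr g (leq0n r.+1)) big_mkord -sumrN;
     apply: eq_bigr => i _; rewrite opprB.
rewrite [in RHS]big_ord_recr /= /g horner_tail0 mulr0 subr0 subnn horner_tail_rec.
rewrite horner_tail_oversize ?hm // -hm minPoly1_coef_top hm [(- T1) ^+ _]exprNn.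
ring.
Qed.

(* Hence T0 c + T1 and the Veronese sum are inverse up to a scalar of F. *)
Lemma veronese_tail_in_base (T0 T1 : L) : T0 \in 1%VS -> T1 \in 1%VS ->
  (T0 * c + T1) * veronese_tail_sum T0 T1 \in 1%VS.
Proof.
move=> T0in T1in; rewrite veronese_tail_identity rpredN; apply: rpred_sum => i _.
by rewrite !rpredM ?rpredX ?rpredN ?minPoly1_coef_in1.
Qed.

(* The tail_basis i, i < [F(c):F], are linearly independent over F: a relation
   among them is the evaluation at c of a polynomial over F of too small degree,
   whose coefficients form a triangular system with unit diagonal. *)
Lemma tail_basis_free (y : 'I_r.+1 -> L) : (forall i, y i \in 1%VS) ->
  \sum_(i < r.+1) y i * tail_basis i = 0 -> forall i, y i = 0.
Proof.
move=> y1 hs.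
pose P := \sum_(i < r.+1) (y i * (-1) ^+ i) *: Poly (drop i.+1 f).
have coefP k : P`_k = \sum_(i < r.+1) y i * (-1) ^+ i * f`_(i.+1 + k).
  by rewrite /P coef_sum; apply: eq_bigr => i _; rewrite coefZ coef_Poly nth_drop.
have P0 : P = 0.
  apply: (minPoly1_min_size (c := c)).
  - apply/polyOverP => k; rewrite coefP; apply: rpred_sum => i _.
    by rewrite !rpredM ?rpredX ?rpredN ?mem1v ?minPoly1_coef_in1.
  - apply/rootP; rewrite -hs /P horner_sum; apply: eq_bigr => i _.
    by rewrite hornerZ /tail_basis mulrA.
  - rewrite hm; apply/leq_sizeP => k hk; rewrite coefP big1 // => i _.
    by rewrite nth_default ?mulr0 // size_minPoly1 hm; lia.
have coef_diag (i : 'I_r.+1) : (forall k : 'I_r.+1, (k < i)%N -> y k = 0) ->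
    y i = 0.
  move=> below; have := coefP (r - i)%N; rewrite P0 coef0 (bigD1 i) //= big1.
    have top : (i.+1 + (r - i))%N = \dim <<1; c>> by rewrite hm; have := ltn_ord i; lia.
    rewrite addr0 top minPoly1_coef_top mulr1 => /esym/eqP.
    by rewrite mulf_eq0 signr_eq0 orbF => /eqP.
  move=> k hki; have /eqP hki' : (k : nat) != i := hki; case: (ltnP k i) => hk.
    by rewrite below ?mul0r.
  by rewrite nth_default ?mulr0 // size_minPoly1 hm; lia.
suff all_below j : forall i : 'I_r.+1, (i < j)%N -> y i = 0.
  by move=> i; exact: (all_below r.+1).
elim: j => [//|j IH] i hi; apply: coef_diag => k hk; apply: IH; lia.
Qed.

End VeroneseTails.

Lemma vlineZ (K : fieldType) (vT : vectType K) (k : K) (v : vT) :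
  k != 0 -> <[k *: v]>%VS = <[v]>%VS.
Proof.
move=> nz_k; apply/eqP; rewrite eqEdim -memvE memvZ ?memv_line //=.
by rewrite !dim_vline scaler_eq0 (negbTE nz_k).
Qed.

Lemma jmap_vline (F : finFieldType) (L : fieldExtType F) (z : L) :
  z != 0 -> jmap <[z]>%VS = <[z^-1]>%VS.
Proof.
move=> nz_z; have nz_pick : vpick <[z]>%VS != 0.
  by rewrite vpick0 -dimv_eq0 dim_vline nz_z.
have /vlineP [k def_pick] := memv_pick <[z]>%VS.
have nz_k : k != 0 by apply: contraNneq nz_pick => k0; rewrite def_pick k0 scale0r.
by rewrite /jmap def_pick invrZ ?unitfE // vlineZ ?invr_eq0.
Qed.

Section Pencil.
Variables (F : finFieldType) (L : fieldExtType F) (a b : L) (r : nat).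
Hypotheses (nz_b : b != 0) (c_notin1 : a / b \notin 1%VS).
Hypothesis hm : \dim <<1; a / b>> = r.+1.

Local Notation c := (a / b).

Definition embed_basis (i : 'I_r.+1) : L := b^-1 * tail_basis c i.

Lemma pencil_factor (t0 t1 : F) :
  t0 *: a + t1 *: b = b * (t0%:A * c + t1%:A).
Proof. by rewrite -[t0 *: a]mulr_algl -[t1 *: b]mulr_algl; field. Qed.

Lemma pencil_factor_neq0 (t0 t1 : F) : (t0, t1) != (0, 0) ->
  t0%:A * c + t1%:A != 0.
Proof.
move=> nz_t; have [t00 | nz_t0] := eqVneq t0 0.
  have nz_t1 : t1 != 0 by apply: contra nz_t => /eqP ->; rewrite t00.
  by rewrite t00 scale0r mul0r add0r scaler_eq0 oner_eq0 orbF.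
apply: contra c_notin1; rewrite addr_eq0 => /eqP def_c.
have nz_T0 : t0%:A != 0 :> L by rewrite scaler_eq0 oner_eq0 orbF.
rewrite -(mulKf nz_T0 c) def_c.
by rewrite rpredM ?rpredV ?rpredN ?rpredZ ?mem1v.
Qed.

(* By freeness of the tail basis, the Veronese sums never vanish: the
   coefficient t0^r or t1^r of the relation would have to be zero. *)
Lemma veronese_tail_sum_neq0 (t0 t1 : F) : (t0, t1) != (0, 0) ->
  veronese_tail_sum c r t0%:A t1%:A != 0.
Proof.
move=> nz_t; apply/eqP => sum0.
have in1 (i : 'I_r.+1) : (t0%:A ^+ (r - i) * t1%:A ^+ i : L) \in 1%VS.
  by rewrite rpredM ?rpredX ?rpredZ ?mem1v.
have coef0 := tail_basis_free hm in1 sum0.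
have [t00 | nz_t0] := eqVneq t0 0.
  have nz_t1 : t1 != 0 by apply: contra nz_t => /eqP ->; rewrite t00.
  have /eqP := coef0 ord_max; rewrite /= subnn expr0 mul1r expf_eq0.
  by rewrite scaler_eq0 oner_eq0 orbF (negbTE nz_t1) andbF.
have /eqP := coef0 ord0; rewrite /= subn0 expr0 mulr1 expf_eq0.
by rewrite scaler_eq0 oner_eq0 orbF (negbTE nz_t0) andbF.
Qed.

Lemma lcomb_embed_veronese (t0 t1 : F) :
  lcomb embed_basis (veronese_vec r t0 t1)
  = b^-1 * veronese_tail_sum c r t0%:A t1%:A.
Proof.
rewrite /lcomb /veronese_tail_sum mulr_sumr; apply: eq_bigr => i _.
rewrite mxE /embed_basis !exprZn !expr1n !(scalerAl, scalerAr) -mulr_algl.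
by rewrite -!in_algE rmorphM /=; ring.
Qed.

Lemma inverse_pencil_point (t0 t1 : F) : (t0, t1) != (0, 0) ->
  <[(t0 *: a + t1 *: b)^-1]>%VS = <[lcomb embed_basis (veronese_vec r t0 t1)]>%VS.
Proof.
move=> nz_t; rewrite lcomb_embed_veronese pencil_factor.
have nz_e := pencil_factor_neq0 nz_t; have nz_S := veronese_tail_sum_neq0 nz_t.
set e := t0%:A * c + t1%:A in nz_e *; set S := veronese_tail_sum _ _ _ _ in nz_S *.
have /vlineP [k def_k] : e * S \in 1%VS by rewrite veronese_tail_in_base ?rpredZ ?mem1v.
have nz_k : k != 0.
  by apply: contraNneq (mulf_neq0 nz_e nz_S) => k0; rewrite def_k k0 scale0r.
have -> : b^-1 * S = k *: (b * e)^-1.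
  by rewrite -[k *: _]mulr_algl -def_k; field; rewrite nz_e nz_b.
by rewrite vlineZ.
Qed.

Lemma pencil_point_neq0 (t0 t1 : F) :
  (t0, t1) != (0, 0) -> t0 *: a + t1 *: b != 0.
Proof. by move=> nz_t; rewrite pencil_factor mulf_neq0 ?pencil_factor_neq0. Qed.

Lemma lcomb_embed_injective : injective (lcomb embed_basis).
Proof.
have ker0 x : lcomb embed_basis x = 0 -> x = 0.
  rewrite /lcomb (eq_bigr (fun i => b^-1 * ((x 0 i)%:A * tail_basis c i))); last first.
    by move=> i _; rewrite /embed_basis mulr_algl scalerAr.
  rewrite -mulr_sumr => /eqP; rewrite mulf_eq0 invr_eq0 (negbTE nz_b) => /eqP.
  move=> /(tail_basis_free hm (fun i => rpredZ _ (mem1v _))) coef0.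
  apply/rowP => i; rewrite mxE; have /eqP := coef0 i.
  by rewrite scaler_eq0 oner_eq0 orbF => /eqP.
move=> x y exy; apply/eqP; rewrite -subr_eq0; apply/eqP/ker0.
by rewrite linearB /= exy subrr.
Qed.

Lemma jimage_line_join (P : {vspace L}) :
  jimage (line_join a b) P <->
  exists t0 t1 : F, (t0, t1) != (0, 0) /\ P = <[(t0 *: a + t1 *: b)^-1]>%VS.
Proof.
split.
  case=> Q [dimQ sQl] ->; have nz_pick : vpick Q != 0.
    by rewrite vpick0 -dimv_eq0 dimQ.
  have /memv_addP [u /vlineP [t0 ->] [v /vlineP [t1 ->] def_pick]] :=
    subvP sQl _ (memv_pick Q).
  exists t0, t1; split; last by rewrite /jmap def_pick.
  by apply: contra nz_pick => /eqP [t00 t10]; rewrite def_pick t00 t10 !scale0r addr0.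
case=> t0 [t1 [nz_t ->]]; have nz_p := pencil_point_neq0 nz_t.
exists <[t0 *: a + t1 *: b]>%VS; last by rewrite jmap_vline.
split; first by rewrite /is_point dim_vline nz_p.
by rewrite -memvE memv_add ?memvZ ?memv_line.
Qed.

End Pencil.

Lemma ratio_notin_base (F : fieldType) (L : fieldExtType F) (a b : L) :
  a != 0 -> b != 0 -> <[a]>%VS != <[b]>%VS -> a / b \notin 1%VS.
Proof.
move=> nz_a nz_b; apply: contra => /vlineP [k def_k].
have nz_k : k != 0.
  by apply: contraNneq nz_a => k0; rewrite -(divfK nz_b a) def_k k0 scale0r mul0r.
by rewrite -(divfK nz_b a) def_k mulr_algl vlineZ.
Qed.

Unset Implicit Arguments.

Theorem mainTheorem1 (F : finFieldType) (L : fieldExtType F) (n : nat)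
  (hdim : \dim {:L} = n) (hn : (2 <= n)%N)
  (a b : L) (ha : a != 0) (hb : b != 0)
  (hab : <[a]>%VS != <[b]>%VS) :
  r_uple_image ((\dim <<1%VS; a / b>>%VS).-1)%N (jimage (line_join a b)).
Proof.
have c_notin1 := ratio_notin_base ha hb hab.
set r := (\dim <<1%VS; a / b>>).-1.
have hm : \dim <<1%VS; a / b>> = r.+1 by rewrite prednK // adim_gt0.
exists (lcomb (embed_basis a b (r := r))); split.
  exact: lcomb_embed_injective.
move=> P; rewrite (jimage_line_join hb c_notin1); split=> -[t0 [t1 [nz_t ->]]];
  by exists t0, t1; rewrite (inverse_pencil_point hb c_notin1 hm).
Qed.
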